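(* Let $\eta\in\mathbb{R}\setminus\{0\}$, let $\varepsilon',\ell,\delta,\delta'>0$, let $A\in\mathrm{SL}(2,\mathbb{Z})$ and set $v=A(0,1)$. There exists $\xi_0=\xi_0(|\eta|,A,\ell,\varepsilon',\delta,\delta')\in\mathbb{N}^*$ with the following property. Let $X\subseteq\mathbb{R}^2$ be non-empty, let $\varepsilon>0$, and let $\gamma$ be a union of segments in $\mathbb{R}^2$ which is $\varepsilon$-dense in $X$, such that the direction of each segment of $\gamma$ is at distance greater than $\delta$ from the direction of $v$ on $\mathbb{S}^1$, and each segment of $\gamma$ has length greater than $\ell$. Then for every integer $\xi\ge\xi_0$ there exists a subset $\gamma'\subseteq A\circ J_{\eta,\xi}\circ A^{-1}(\gamma)$ which is a union of segments, is $(\varepsilon+\varepsilon')$-dense in $\mathrm{Str}(X,\eta v)$, whose segments have directions within distance $\delta'$ of the direction of $v$ on $\mathbb{S}^1$, and whose segments have lengths greater than $\|A^{-1}\|^{-1}|\eta|$.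
   Context: Directions of non-zero vectors of $\mathbb{R}^2$ are identified with the unit circle $\mathbb{S}^1$, equipped with the Riemannian metric induced by the Euclidean metric of $\mathbb{R}^2$. $\|\cdot\|$ is the operator norm. $X$ is $\varepsilon$-dense in $Y$ if $Y\subseteq B_\varepsilon(X)$ (open $\varepsilon$-neighbourhood). $\mathrm{Str}(X,w)=X+[-w,w]$ (Minkowski sum). For $\xi\in\mathbb{N}^*$, $\phi_\xi(x)=(-1)^{z+1}(4\xi x-2z-1)$ for $z\in\mathbb{Z}$, $x\in[\frac{z}{2\xi},\frac{z+1}{2\xi})$, and $J_{\eta,\xi}(x,y)=(x,y+\eta\phi_\xi(x))$. *)

From Stdlib Require Import Reals ZArith.
From Coquelicot Require Import Coquelicot.
Open Scope R_scope.

Definition pt := (R * R)%type.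

Definition padd (p q : pt) : pt := (fst p + fst q, snd p + snd q).
Definition psub (p q : pt) : pt := (fst p - fst q, snd p - snd q).
Definition pscal (t : R) (p : pt) : pt := (t * fst p, t * snd p).
Definition pdot (p q : pt) : R := fst p * fst q + snd p * snd q.
Definition pnorm (p : pt) : R := sqrt (pdot p p).
Definition pdist (p q : pt) : R := pnorm (psub p q).

(* Riemannian (angular) distance on S^1 between the directions of two
   non-zero vectors u and v. *)
Definition dir_dist (u v : pt) : R :=
  acos (pdot u v / (pnorm u * pnorm v)).

Definition seg (p q : pt) : pt -> Prop :=
  fun x => exists t, 0 <= t <= 1 /\ x = padd p (pscal t (psub q p)).

Definition is_union_of_segs (I : Type) (p q : I -> pt) (g : pt -> Prop) : Prop :=
  forall x, g x <-> exists i, seg (p i) (q i) x.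

(* Y is eps-dense ... : Y is contained in the open eps-neighbourhood of X *)
Definition eps_dense (X : pt -> Prop) (eps : R) (Y : pt -> Prop) : Prop :=
  forall y, Y y -> exists x, X x /\ pdist x y < eps.

Definition Str (X : pt -> Prop) (w : pt) : pt -> Prop :=
  fun y => exists x t, X x /\ -1 <= t <= 1 /\ y = padd x (pscal t w).

Record mat2Z := Mat2Z { ma : Z; mb : Z; mc : Z; md : Z }.
Definition in_SL2Z (A : mat2Z) : Prop :=
  (ma A * md A - mb A * mc A = 1)%Z.
Definition mapp (A : mat2Z) (x : pt) : pt :=
  (IZR (ma A) * fst x + IZR (mb A) * snd x,
   IZR (mc A) * fst x + IZR (md A) * snd x).
(* inverse of a determinant-one matrix *)
Definition minv (A : mat2Z) : mat2Z :=
  Mat2Z (md A) (- mb A) (- mc A) (ma A).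

Definition opnorm (A : mat2Z) : R :=
  real (Lub_Rbar (fun r => exists x, pnorm x = 1 /\ r = pnorm (mapp A x))).

Definition phi (xi : nat) (x : R) : R :=
  let z := Int_part (2 * INR xi * x) in
  powerRZ (-1) (z + 1) * (4 * INR xi * x - 2 * IZR z - 1).

Definition J (eta : R) (xi : nat) (p : pt) : pt :=
  (fst p, snd p + eta * phi xi (fst p)).

Definition img (f : pt -> pt) (g : pt -> Prop) : pt -> Prop :=
  fun y => exists x, g x /\ y = f x.

From Stdlib Require Import Reals ZArith Lra Lia Psatz.
From Coquelicot Require Import Coquelicot.
Open Scope R_scope.

(* Work in the coordinates u = A^-1 y: there v becomes the vertical vector
   (0, 1) and J adds [eta * phi xi x] to the second coordinate.  A segment of
   gamma transverse to v becomes the graph of an affine function with bounded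
   slope over an interval of length bounded below.  On each tooth
   [z h, (z + 1) h], h = 1 / (2 xi), the sawtooth phi is affine and sweeps
   [-1, 1], so J maps the piece of graph over it to a segment of horizontal
   extent h and vertical extent 2 |eta| + O(h), and every point g + tau eta v
   (g in gamma, |tau| <= 1) is O(h)-close to one of these segments.  For h
   small they are nearly vertical and longer than |eta| in u-coordinates,
   which after applying A gives the direction and length bounds. *)

Definition cross (u v : pt) : R := fst u * snd v - snd u * fst v.

Lemma pdot_self_nonneg u : 0 <= pdot u u.
Proof. destruct u as [a b]; unfold pdot; simpl; nra. Qed.

Lemma pnorm_nonneg u : 0 <= pnorm u.
Proof. apply sqrt_pos. Qed.

Lemma pnorm_sqr u : pnorm u * pnorm u = pdot u u.
Proof. apply sqrt_sqrt, pdot_self_nonneg. Qed.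

Lemma pnorm_eq0 u : pnorm u = 0 -> u = (0, 0).
Proof.
  intros H. apply sqrt_eq_0 in H; [|apply pdot_self_nonneg].
  destruct u as [a b]; unfold pdot in H; simpl in H. f_equal; nra.
Qed.

Lemma pdot_cross_sqr u v : pdot u v ^ 2 + cross u v ^ 2 = pdot u u * pdot v v.
Proof. destruct u, v; unfold pdot, cross; simpl; ring. Qed.

Lemma Rabs_pdot_le u v : Rabs (pdot u v) <= pnorm u * pnorm v.
Proof.
  rewrite <- (Rabs_right (pnorm u * pnorm v))
    by (apply Rle_ge, Rmult_le_pos; apply pnorm_nonneg).
  apply Rsqr_le_abs_0. unfold Rsqr.
  pose proof (pdot_cross_sqr u v). pose proof (pnorm_sqr u). pose proof (pnorm_sqr v).
  nra.
Qed.

Lemma pnorm_add_le u v : pnorm (padd u v) <= pnorm u + pnorm v.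
Proof.
  apply Rsqr_incr_0_var; [|pose proof (pnorm_nonneg u); pose proof (pnorm_nonneg v); lra].
  unfold Rsqr. rewrite pnorm_sqr.
  pose proof (pnorm_sqr u). pose proof (pnorm_sqr v).
  pose proof (Rle_trans _ _ _ (Rle_abs _) (Rabs_pdot_le u v)).
  assert (pdot (padd u v) (padd u v) = pdot u u + 2 * pdot u v + pdot v v)
    by (destruct u, v; unfold pdot, padd; simpl; ring).
  nra.
Qed.

Lemma Rabs_fst_le u : Rabs (fst u) <= pnorm u.
Proof.
  rewrite <- sqrt_Rsqr_abs. apply sqrt_le_1_alt.
  destruct u as [a b]; unfold Rsqr, pdot; simpl; nra.
Qed.

Lemma Rabs_snd_le u : Rabs (snd u) <= pnorm u.
Proof.
  rewrite <- sqrt_Rsqr_abs. apply sqrt_le_1_alt.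
  destruct u as [a b]; unfold Rsqr, pdot; simpl; nra.
Qed.

Lemma pnorm_le_Rabs u : pnorm u <= Rabs (fst u) + Rabs (snd u).
Proof.
  apply Rsqr_incr_0_var; [|pose proof (Rabs_pos (fst u)); pose proof (Rabs_pos (snd u)); lra].
  unfold Rsqr. rewrite pnorm_sqr.
  destruct u as [a b]; unfold pdot; simpl.
  pose proof (Rabs_pos a). pose proof (Rabs_pos b).
  pose proof (pow2_abs a). pose proof (pow2_abs b).
  nra.
Qed.

Lemma pnorm_scal t u : pnorm (pscal t u) = Rabs t * pnorm u.
Proof.
  unfold pnorm. rewrite <- sqrt_Rsqr_abs, <- sqrt_mult_alt by apply Rle_0_sqr.
  f_equal; destruct u; unfold pdot, pscal, Rsqr; simpl; ring.
Qed.

Lemma psub_swap p q : psub p q = pscal (-1) (psub q p).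
Proof. destruct p, q; unfold psub, pscal; simpl; f_equal; ring. Qed.

Lemma pnorm_psub_sym p q : pnorm (psub p q) = pnorm (psub q p).
Proof. rewrite psub_swap, pnorm_scal, Rabs_m1; ring. Qed.

Lemma mapp_add M u w : mapp M (padd u w) = padd (mapp M u) (mapp M w).
Proof. destruct u, w; unfold mapp, padd; simpl; f_equal; ring. Qed.

Lemma mapp_sub M u w : mapp M (psub u w) = psub (mapp M u) (mapp M w).
Proof. destruct u, w; unfold mapp, psub; simpl; f_equal; ring. Qed.

Lemma mapp_scal M t u : mapp M (pscal t u) = pscal t (mapp M u).
Proof. destruct u; unfold mapp, pscal; simpl; f_equal; ring. Qed.

Definition mdet (M : mat2Z) : R := IZR (ma M) * IZR (md M) - IZR (mb M) * IZR (mc M).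

Lemma mdet_SL2Z A : in_SL2Z A -> mdet A = 1.
Proof. intros H. unfold mdet, in_SL2Z in *. rewrite <- !mult_IZR, <- minus_IZR, H. reflexivity. Qed.

Lemma mapp_minv_mapp_mdet A u : mapp (minv A) (mapp A u) = pscal (mdet A) u.
Proof. destruct u; unfold mapp, minv, mdet, pscal; simpl; rewrite !opp_IZR; f_equal; ring. Qed.

Lemma mapp_mapp_minv_mdet A u : mapp A (mapp (minv A) u) = pscal (mdet A) u.
Proof. destruct u; unfold mapp, minv, mdet, pscal; simpl; rewrite !opp_IZR; f_equal; ring. Qed.

Lemma pscal_1 u : pscal 1 u = u.
Proof. destruct u; unfold pscal; simpl; f_equal; ring. Qed.

Lemma mapp_minv_mapp A u : in_SL2Z A -> mapp (minv A) (mapp A u) = u.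
Proof. intros H. rewrite mapp_minv_mapp_mdet, mdet_SL2Z by exact H. apply pscal_1. Qed.

Lemma mapp_mapp_minv A u : in_SL2Z A -> mapp A (mapp (minv A) u) = u.
Proof. intros H. rewrite mapp_mapp_minv_mdet, mdet_SL2Z by exact H. apply pscal_1. Qed.

Lemma fst_mapp_minv A d : fst (mapp (minv A) d) = cross d (mapp A (0, 1)).
Proof. destruct d; unfold mapp, minv, cross; simpl; rewrite !opp_IZR; ring. Qed.

Lemma mapp_e2_pos A : in_SL2Z A -> 0 < pnorm (mapp A (0, 1)).
Proof.
  intros HA. destruct (Rle_lt_or_eq_dec _ _ (pnorm_nonneg (mapp A (0, 1)))) as [H|H]; [exact H|].
  symmetry in H. apply pnorm_eq0 in H. unfold mapp in H; simpl in H.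
  injection H as Hb Hd. apply mdet_SL2Z in HA. unfold mdet in HA. nra.
Qed.

Definition mbound (M : mat2Z) : R :=
  1 + Rabs (IZR (ma M)) + Rabs (IZR (mb M)) + Rabs (IZR (mc M)) + Rabs (IZR (md M)).

Lemma mbound_ge1 M : 1 <= mbound M.
Proof.
  unfold mbound. pose proof (Rabs_pos (IZR (ma M))). pose proof (Rabs_pos (IZR (mb M))).
  pose proof (Rabs_pos (IZR (mc M))). pose proof (Rabs_pos (IZR (md M))). lra.
Qed.

Lemma pnorm_mapp_le_mbound M u : pnorm (mapp M u) <= mbound M * pnorm u.
Proof.
  eapply Rle_trans; [apply pnorm_le_Rabs|].
  pose proof (Rabs_fst_le u). pose proof (Rabs_snd_le u). pose proof (pnorm_nonneg u).
  destruct u as [x y]; unfold mapp, mbound; simpl in *.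
  pose proof (Rabs_triang (IZR (ma M) * x) (IZR (mb M) * y)).
  pose proof (Rabs_triang (IZR (mc M) * x) (IZR (md M) * y)).
  rewrite !Rabs_mult in *.
  pose proof (Rabs_pos (IZR (ma M))). pose proof (Rabs_pos (IZR (mb M))).
  pose proof (Rabs_pos (IZR (mc M))). pose proof (Rabs_pos (IZR (md M))).
  pose proof (Rabs_pos x). pose proof (Rabs_pos y).
  nra.
Qed.

Lemma pnorm_mapp_le_opnorm M u : pnorm (mapp M u) <= opnorm M * pnorm u.
Proof.
  set (E := fun r => exists x, pnorm x = 1 /\ r = pnorm (mapp M x)).
  destruct (Lub_Rbar_correct E) as [Hub Hlub].
  assert (Hfin : Rbar_le (Lub_Rbar E) (mbound M)).
  { apply Hlub. intros r [x [Hx ->]]. simpl.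
    rewrite <- (Rmult_1_r (mbound M)), <- Hx. apply pnorm_mapp_le_mbound. }
  assert (Hunit : forall x, pnorm x = 1 -> pnorm (mapp M x) <= opnorm M).
  { intros x Hx. specialize (Hub _ (ex_intro _ x (conj Hx eq_refl))).
    unfold opnorm. fold E. destruct (Lub_Rbar E); simpl in *; tauto. }
  destruct (Rle_lt_or_eq_dec _ _ (pnorm_nonneg u)) as [Hu|Hu].
  - set (x := pscal (/ pnorm u) u).
    assert (Hx : pnorm x = 1).
    { unfold x. rewrite pnorm_scal, Rabs_right by (apply Rle_ge, Rlt_le, Rinv_0_lt_compat, Hu).
      field. lra. }
    replace u with (pscal (pnorm u) x)
      by (unfold x; destruct u; unfold pscal; simpl; f_equal; field; lra).
    rewrite mapp_scal, !pnorm_scal, Hx, Rabs_right by lra.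
    specialize (Hunit x Hx). nra.
  - pose proof (pnorm_mapp_le_mbound M u). pose proof (pnorm_nonneg (mapp M u)).
    rewrite <- Hu in *. lra.
Qed.

Lemma Rabs_cross_dir_dist d v : 0 < pnorm d -> 0 < pnorm v ->
  Rabs (cross d v) = sin (dir_dist d v) * (pnorm d * pnorm v).
Proof.
  intros Hd Hv. unfold dir_dist. set (N := pnorm d * pnorm v).
  assert (HN : 0 < N) by (apply Rmult_lt_0_compat; assumption).
  set (c := pdot d v / N).
  assert (Hdot : pdot d v = c * N) by (unfold c; field; lra).
  assert (Hc : -1 <= c <= 1).
  { apply Rabs_le_between. unfold c. rewrite Rabs_div, (Rabs_right N) by lra.
    apply Rle_div_l; [lra|]. rewrite Rmult_1_l. apply Rabs_pdot_le. }
  rewrite sin_acos by exact Hc.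
  rewrite <- sqrt_Rsqr_abs, <- (sqrt_Rsqr N) by lra.
  rewrite <- sqrt_mult_alt by (unfold Rsqr; nra).
  f_equal.
  pose proof (pdot_cross_sqr d v). pose proof (pnorm_sqr d). pose proof (pnorm_sqr v).
  unfold Rsqr, N in *. rewrite Hdot in *. nra.
Qed.

Lemma dir_dist_opp d v : dir_dist (pscal (-1) d) v = PI - dir_dist d v.
Proof.
  unfold dir_dist. rewrite pnorm_scal, Rabs_m1, Rmult_1_l, <- acos_opp, <- Rdiv_opp_l.
  f_equal. f_equal. destruct d, v; unfold pdot, pscal; simpl; ring.
Qed.

Lemma sin_lt_of_between delta theta : 0 <= delta <= PI / 2 ->
  delta < theta < PI - delta -> sin delta < sin theta.
Proof.
  intros Hd Ht. destruct (Rle_dec theta (PI / 2)).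
  - apply sin_increasing_1; lra.
  - rewrite <- (sin_PI_x theta). apply sin_increasing_1; lra.
Qed.

Lemma dir_dist_transverse d v delta : 0 <= delta <= PI / 2 ->
  0 < pnorm d -> 0 < pnorm v ->
  dir_dist d v > delta -> dir_dist (pscal (-1) d) v > delta ->
  sin delta * (pnorm d * pnorm v) < Rabs (cross d v).
Proof.
  intros Hdelta Hd Hv H1 H2. rewrite dir_dist_opp in H2.
  rewrite Rabs_cross_dir_dist by assumption.
  apply Rmult_lt_compat_r; [apply Rmult_lt_0_compat; assumption|].
  apply sin_lt_of_between; lra.
Qed.

Lemma dir_dist_close d v delta : 0 <= delta <= PI / 2 ->
  0 < pnorm d -> 0 < pnorm v ->
  Rabs (cross d v) <= sin delta * (pnorm d * pnorm v) ->
  dir_dist d v <= delta \/ dir_dist (pscal (-1) d) v <= delta.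
Proof.
  intros Hdelta Hd Hv H.
  destruct (Rle_dec (dir_dist d v) delta) as [|H1]; [left; assumption|].
  destruct (Rle_dec (dir_dist (pscal (-1) d) v) delta) as [|H2]; [right; assumption|].
  pose proof (dir_dist_transverse d v delta Hdelta Hd Hv) as Ht. lra.
Qed.

Lemma exists_acute_angle_le delta : 0 < delta ->
  exists d, (0 < d <= PI / 2 /\ d <= delta) /\ 0 < sin d.
Proof.
  intros Hdelta. pose proof PI_RGT_0. exists (Rmin delta (PI / 2)).
  assert (0 < Rmin delta (PI / 2)) by (apply Rmin_glb_lt; lra).
  pose proof (Rmin_l delta (PI / 2)). pose proof (Rmin_r delta (PI / 2)).
  split; [split; [split|]|apply sin_gt_0]; lra.
Qed.

(* [phi xi] is affine on each tooth [z h, (z + 1) h], h = tooth_width xi,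
   rising from [- tooth_sign z] to [tooth_sign z]. *)
Definition tooth_width (xi : nat) : R := / (2 * INR xi).

Definition tooth_sign (z : Z) : R := powerRZ (-1) (z + 1).

Lemma tooth_width_pos xi : (1 <= xi)%nat -> 0 < tooth_width xi.
Proof.
  intros Hxi. apply Rinv_0_lt_compat. pose proof (lt_0_INR xi ltac:(lia)). lra.
Qed.

Lemma eventually_tooth_width_mul_lt k c : 0 < k -> 0 < c ->
  eventually (fun xi => tooth_width xi * k < c).
Proof.
  intros Hk Hc. destruct (archimed_cor1 (c / k)) as [n [Hn Hn0]].
  { apply Rdiv_lt_0_compat; assumption. }
  exists n. intros xi Hxi. apply Rlt_div_r; [lra|].
  pose proof (lt_0_INR n Hn0). pose proof (le_INR n xi Hxi).
  assert (/ INR xi <= / INR n) by (apply Rinv_le_contravar; lra).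
  assert (tooth_width xi < / INR xi) by (apply Rinv_lt_contravar; nra).
  lra.
Qed.

Lemma tooth_sign_sqr z : tooth_sign z * tooth_sign z = 1.
Proof.
  unfold tooth_sign. rewrite <- powerRZ_mult.
  replace (-1 * -1) with 1 by ring. apply powerRZ_R1.
Qed.

Lemma Rabs_tooth_sign z : Rabs (tooth_sign z) = 1.
Proof.
  pose proof (tooth_sign_sqr z) as Hsqr. pose proof (Rabs_pos (tooth_sign z)).
  assert (Rabs (tooth_sign z) * Rabs (tooth_sign z) = 1)
    by (rewrite <- Rabs_mult, Hsqr; apply Rabs_R1).
  nra.
Qed.

Lemma tooth_sign_succ z : tooth_sign (z + 1) = - tooth_sign z.
Proof. unfold tooth_sign. rewrite (powerRZ_add _ (z + 1)) by lra. simpl. ring. Qed.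

(* On the tooth [z h, (z+1) h] the floor in [phi] is [z], except at the right
   end where it jumps to [z + 1]; the sign flip makes both formulas agree there. *)
Lemma phi_tooth xi z t : (1 <= xi)%nat -> 0 <= t <= 1 ->
  phi xi (IZR z * tooth_width xi + t * tooth_width xi) = tooth_sign z * (2 * t - 1).
Proof.
  intros Hxi Ht. pose proof (lt_0_INR xi ltac:(lia)).
  unfold phi, tooth_width.
  replace (2 * INR xi * (IZR z * / (2 * INR xi) + t * / (2 * INR xi))) with (IZR z + t)
    by (field; lra).
  replace (4 * INR xi * (IZR z * / (2 * INR xi) + t * / (2 * INR xi))) with (2 * (IZR z + t))
    by (field; lra).
  destruct (Rlt_dec t 1).
  - rewrite <- (Int_part_spec (IZR z + t) z) by lra. fold (tooth_sign z). ring.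
  - rewrite <- (Int_part_spec (IZR z + t) (z + 1)) by (rewrite plus_IZR; lra).
    fold (tooth_sign (z + 1)). rewrite tooth_sign_succ, plus_IZR.
    replace t with 1 by lra. ring.
Qed.

Definition slope (P Q : pt) : R := (snd Q - snd P) / (fst Q - fst P).

Definition graph (P Q : pt) (x : R) : pt := (x, snd P + slope P Q * (x - fst P)).

Lemma Rmax_minus_Rmin a b : Rmax a b - Rmin a b = Rabs (b - a).
Proof. unfold Rmax, Rmin, Rabs; destruct (Rle_dec a b), (Rcase_abs (b - a)); lra. Qed.

Lemma seg_mapp M P Q y : seg P Q y -> seg (mapp M P) (mapp M Q) (mapp M y).
Proof.
  intros [t [Ht ->]]. exists t. split; [exact Ht|].
  rewrite mapp_add, mapp_scal, mapp_sub. reflexivity.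
Qed.

Lemma seg_graph P Q y : fst P <> fst Q -> seg P Q y ->
  Rmin (fst P) (fst Q) <= fst y <= Rmax (fst P) (fst Q) /\ y = graph P Q (fst y).
Proof.
  intros HPQ [t [Ht ->]]. destruct P as [a b], Q as [c d]; simpl in *. split.
  - unfold Rmin, Rmax; destruct (Rle_dec a c); split; nra.
  - unfold graph, slope, padd, pscal, psub; simpl. f_equal. field. lra.
Qed.

Lemma graph_seg P Q x : fst P <> fst Q ->
  Rmin (fst P) (fst Q) <= x <= Rmax (fst P) (fst Q) -> seg P Q (graph P Q x).
Proof.
  intros HPQ Hx. destruct P as [a b], Q as [c d]; simpl in *.
  exists ((x - a) / (c - a)). split.
  - unfold Rmin, Rmax in Hx; destruct (Rle_dec a c).
    + assert (0 < c - a) by lra.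
      split; [apply Rdiv_le_0_compat; lra | apply Rle_div_l; lra].
    + replace ((x - a) / (c - a)) with ((a - x) / (a - c)) by (field; lra).
      assert (0 < a - c) by lra.
      split; [apply Rdiv_le_0_compat; lra | apply Rle_div_l; lra].
  - unfold graph, slope, padd, pscal, psub; simpl. f_equal; field; lra.
Qed.

Lemma pnorm_graph_sub P Q x x' :
  pnorm (psub (graph P Q x) (graph P Q x')) <= Rabs (x - x') * (1 + Rabs (slope P Q)).
Proof.
  eapply Rle_trans; [apply pnorm_le_Rabs|]. unfold graph, psub; simpl.
  replace (snd P + slope P Q * (x - fst P) - (snd P + slope P Q * (x' - fst P)))
    with (slope P Q * (x - x')) by ring.
  rewrite Rabs_mult. lra.
Qed.

Lemma exists_int_mult_between h r : 0 < h -> exists z : Z, r < IZR z * h <= r + h.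
Proof.
  intros Hh. destruct (archimed (r / h)) as [H1 H2]. exists (up (r / h)).
  split.
  - apply Rlt_div_l in H1; [lra | lra].
  - apply Rle_div_r; [lra|]. unfold Rdiv in *. rewrite Rmult_plus_distr_r, Rinv_r by lra. lra.
Qed.

Lemma exists_tooth_near h a b s : 0 < h -> a <= s <= b -> 2 * h <= b - a ->
  exists z : Z, a <= IZR z * h /\ IZR z * h + h <= b /\
    forall t, 0 <= t <= 1 -> Rabs (IZR z * h + t * h - s) <= 2 * h.
Proof.
  intros Hh Hs Hab.
  destruct (exists_int_mult_between h a Hh) as [m Hm].
  destruct (exists_int_mult_between h (s - 2 * h) Hh) as [n Hn].
  assert (Hth : forall t, 0 <= t <= 1 -> 0 <= t * h <= h) by (intros t Ht; split; nra).
  destruct (Rle_dec (IZR n * h) (IZR m * h)).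
  - exists m. split; [lra|]. split; [lra|].
    intros t Ht. specialize (Hth t Ht). apply Rabs_le. lra.
  - exists n. split; [lra|]. split; [lra|].
    intros t Ht. specialize (Hth t Ht). apply Rabs_le. lra.
Qed.

Definition tooth_curve (eta : R) (xi : nat) (P Q : pt) (z : Z) (t : R) : pt :=
  J eta xi (graph P Q (IZR z * tooth_width xi + t * tooth_width xi)).

Section ToothCurve.
Variables (eta : R) (xi : nat) (P Q : pt) (z : Z).
Hypothesis Hxi : (1 <= xi)%nat.

Lemma tooth_curve_affine t : 0 <= t <= 1 ->
  tooth_curve eta xi P Q z t =
  padd (tooth_curve eta xi P Q z 0)
       (pscal t (psub (tooth_curve eta xi P Q z 1) (tooth_curve eta xi P Q z 0))).
Proof.
  intros Ht. unfold tooth_curve, J, graph; simpl.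
  rewrite !phi_tooth by (assumption || lra).
  unfold padd, pscal, psub; simpl. f_equal; ring.
Qed.

Lemma tooth_curve_sub :
  psub (tooth_curve eta xi P Q z 1) (tooth_curve eta xi P Q z 0) =
  (tooth_width xi, slope P Q * tooth_width xi + 2 * eta * tooth_sign z).
Proof.
  unfold tooth_curve, J, graph; simpl.
  rewrite !phi_tooth by (assumption || lra).
  unfold psub; simpl. f_equal; ring.
Qed.

(* Along a tooth [phi] sweeps [-1, 1] once, so [J] lifts the graph by any
   vertical amount in [[-|eta|, |eta|]]. *)
Lemma tooth_curve_lift tau : -1 <= tau <= 1 ->
  exists t, 0 <= t <= 1 /\
    tooth_curve eta xi P Q z t =
    padd (graph P Q (IZR z * tooth_width xi + t * tooth_width xi)) (0, eta * tau).
Proof.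
  intros Htau. set (t := (tau * tooth_sign z + 1) / 2).
  assert (Ht : 0 <= t <= 1).
  { assert (Hts : Rabs (tau * tooth_sign z) <= 1).
    { rewrite Rabs_mult, Rabs_tooth_sign, Rmult_1_r. apply Rabs_le. lra. }
    apply Rabs_le_between in Hts. unfold t. lra. }
  exists t. split; [exact Ht|].
  unfold tooth_curve, J; simpl. rewrite phi_tooth by assumption.
  replace (tooth_sign z * (2 * t - 1)) with (tau * (tooth_sign z * tooth_sign z))
    by (unfold t; field).
  rewrite tooth_sign_sqr. unfold padd; simpl. f_equal; ring.
Qed.

End ToothCurve.

Lemma transverse_seg_bounds A p q delta l : in_SL2Z A -> 0 < delta <= PI / 2 -> 0 <= l ->
  dir_dist (psub q p) (mapp A (0, 1)) > delta ->
  dir_dist (psub p q) (mapp A (0, 1)) > delta ->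
  pdist p q > l ->
  sin delta * pnorm (mapp A (0, 1)) * l <
    Rabs (fst (mapp (minv A) q) - fst (mapp (minv A) p)) /\
  Rabs (slope (mapp (minv A) p) (mapp (minv A) q)) <=
    mbound (minv A) / (sin delta * pnorm (mapp A (0, 1))).
Proof.
  intros HA Hdelta Hl H1 H2 Hpq.
  set (v := mapp A (0, 1)) in *. set (d := psub q p) in *.
  assert (HV : 0 < pnorm v) by (apply mapp_e2_pos; exact HA).
  assert (Hs : 0 < sin delta) by (apply sin_gt_0; pose proof PI_RGT_0; lra).
  assert (Hd : l < pnorm d) by (unfold d; rewrite pnorm_psub_sym; exact Hpq).
  rewrite psub_swap in H2. fold d in H2.
  pose proof (dir_dist_transverse d v delta ltac:(lra) ltac:(lra) HV H1 H2) as Hcross.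
  assert (Hfst : fst (mapp (minv A) q) - fst (mapp (minv A) p) = cross d v)
    by (unfold v, d; rewrite <- fst_mapp_minv, mapp_sub; reflexivity).
  assert (Hsnd : Rabs (snd (mapp (minv A) q) - snd (mapp (minv A) p)) <= mbound (minv A) * pnorm d).
  { replace (snd (mapp (minv A) q) - snd (mapp (minv A) p)) with (snd (mapp (minv A) d))
      by (unfold d; rewrite mapp_sub; reflexivity).
    eapply Rle_trans; [apply Rabs_snd_le | apply pnorm_mapp_le_mbound]. }
  split.
  - rewrite Hfst.
    assert (sin delta * pnorm v * l < sin delta * pnorm v * pnorm d)
      by (apply Rmult_lt_compat_l; [apply Rmult_lt_0_compat|]; assumption).
    lra.
  - assert (HdV : 0 < sin delta * (pnorm d * pnorm v))
      by (repeat apply Rmult_lt_0_compat; lra).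
    unfold slope. rewrite Hfst, Rabs_div by (intro E; rewrite E, Rabs_R0 in Hcross; lra).
    set (k := mbound (minv A) / (sin delta * pnorm v)).
    assert (Hk : k * (sin delta * (pnorm d * pnorm v)) = mbound (minv A) * pnorm d)
      by (unfold k; field; lra).
    assert (Hk0 : 0 < k)
      by (pose proof (mbound_ge1 (minv A)); apply Rdiv_lt_0_compat; [lra | nra]).
    apply Rle_div_l; [lra|].
    pose proof (Rmult_lt_compat_l k _ _ Hk0 Hcross). lra.
Qed.

Lemma pnorm_tooth_gt h m eta s : 0 < h -> Rabs m * h < Rabs eta -> Rabs s = 1 ->
  Rabs eta < pnorm (h, m * h + 2 * eta * s).
Proof.
  intros Hh Hm Hs. eapply Rlt_le_trans; [|apply Rabs_snd_le]. simpl.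
  pose proof (Rabs_triang_inv (2 * eta * s) (- (m * h))) as H.
  replace (2 * eta * s - - (m * h)) with (m * h + 2 * eta * s) in H by ring.
  rewrite Rabs_Ropp, !Rabs_mult, Hs, (Rabs_right 2), (Rabs_right h) in H by lra.
  lra.
Qed.

Section Teeth.
Variables (A : mat2Z) (eta : R) (xi : nat) (I : Type) (p q : I -> pt).
Hypothesis HA : in_SL2Z A.
Hypothesis Hxi : (1 <= xi)%nat.

Local Notation h := (tooth_width xi).
Local Notation P i := (mapp (minv A) (p i)).
Local Notation Q i := (mapp (minv A) (q i)).
Local Notation v := (mapp A (0, 1)).

Definition tooth_fits (i : I) (z : Z) : Prop :=
  Rmin (fst (P i)) (fst (Q i)) <= IZR z * h /\ IZR z * h + h <= Rmax (fst (P i)) (fst (Q i)).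

Definition tooth : Type := {iz : I * Z | tooth_fits (fst iz) (snd iz)}.

Definition tooth_point (iz : I * Z) (t : R) : pt :=
  mapp A (tooth_curve eta xi (P (fst iz)) (Q (fst iz)) (snd iz) t).

Definition teeth (y : pt) : Prop :=
  exists k : tooth, seg (tooth_point (proj1_sig k) 0) (tooth_point (proj1_sig k) 1) y.

Lemma seg_tooth_point iz y :
  seg (tooth_point iz 0) (tooth_point iz 1) y <-> exists t, 0 <= t <= 1 /\ y = tooth_point iz t.
Proof.
  assert (E : forall t, 0 <= t <= 1 ->
    padd (tooth_point iz 0) (pscal t (psub (tooth_point iz 1) (tooth_point iz 0))) =
    tooth_point iz t).
  { intros t Ht. unfold tooth_point. rewrite <- mapp_sub, <- mapp_scal, <- mapp_add.
    f_equal. symmetry. apply tooth_curve_affine; assumption. }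
  split; intros [t [Ht ->]]; exists t; split; try exact Ht.
  - apply E, Ht.
  - symmetry. apply E, Ht.
Qed.

Lemma minv_tooth_point_sub iz :
  mapp (minv A) (psub (tooth_point iz 1) (tooth_point iz 0)) =
  (h, slope (P (fst iz)) (Q (fst iz)) * h + 2 * eta * tooth_sign (snd iz)).
Proof.
  unfold tooth_point. rewrite <- mapp_sub, mapp_minv_mapp by exact HA.
  apply tooth_curve_sub, Hxi.
Qed.

Lemma tooth_fits_neq i z : tooth_fits i z -> fst (P i) <> fst (Q i).
Proof.
  intros [H1 H2] E. rewrite E, Rmin_left, Rmax_left in * by lra.
  pose proof (tooth_width_pos xi Hxi). lra.
Qed.

Lemma teeth_in_image gamma : is_union_of_segs I p q gamma ->
  forall y, teeth y -> img (fun y => mapp A (J eta xi (mapp (minv A) y))) gamma y.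
Proof.
  intros Hunion y [[[i z] Hfit] Hy]. simpl in Hy.
  apply seg_tooth_point in Hy as [t [Ht ->]].
  set (x := IZR z * h + t * h).
  exists (mapp A (graph (P i) (Q i) x)). split.
  - apply Hunion. exists i.
    assert (Hseg : seg (P i) (Q i) (graph (P i) (Q i) x)).
    { apply graph_seg; [exact (tooth_fits_neq i z Hfit)|].
      destruct Hfit as [H1 H2]. pose proof (tooth_width_pos xi Hxi).
      unfold x. simpl in *. split; nra. }
    apply (seg_mapp A) in Hseg. rewrite !mapp_mapp_minv in Hseg by exact HA. exact Hseg.
  - rewrite mapp_minv_mapp by exact HA. reflexivity.
Qed.

Lemma teeth_dense X gamma eps eps' amax :
  is_union_of_segs I p q gamma -> eps_dense gamma eps X ->
  (forall i, 2 * h <= Rabs (fst (Q i) - fst (P i))) ->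
  (forall i, Rabs (slope (P i) (Q i)) <= amax) ->
  mbound A * (2 * h * (1 + amax)) <= eps' ->
  eps_dense teeth (eps + eps') (Str X (pscal eta v)).
Proof.
  intros Hunion Hdense Hwide Hslope Heps' y0 [x0 [tau [HX [Htau ->]]]].
  destruct (Hdense x0 HX) as [g [Hg Hgx]].
  destruct (proj1 (Hunion g) Hg) as [i Hgi].
  pose proof (tooth_width_pos xi Hxi) as Hh.
  assert (HPQ : fst (P i) <> fst (Q i))
    by (intro E; specialize (Hwide i); rewrite E, Rminus_diag, Rabs_R0 in Hwide; lra).
  destruct (seg_graph _ _ _ HPQ (seg_mapp (minv A) _ _ _ Hgi)) as [Hs Hgraph].
  set (s := fst (mapp (minv A) g)) in *.
  destruct (exists_tooth_near h _ _ s Hh Hs) as [z [Hlo [Hhi Hnear]]].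
  { rewrite Rmax_minus_Rmin. apply Hwide. }
  destruct (tooth_curve_lift eta xi (P i) (Q i) z Hxi tau Htau) as [t [Ht Hlift]].
  exists (tooth_point (i, z) t). split.
  - exists (exist _ (i, z) (conj Hlo Hhi)). apply seg_tooth_point. exists t. auto.
  - set (u := graph (P i) (Q i) (IZR z * h + t * h)).
    assert (E : psub (tooth_point (i, z) t) (padd x0 (pscal tau (pscal eta v))) =
                padd (mapp A (psub u (graph (P i) (Q i) s))) (psub g x0)).
    { assert (Hg' : mapp A (graph (P i) (Q i) s) = g)
        by (rewrite <- Hgraph; apply mapp_mapp_minv, HA).
      rewrite mapp_sub, Hg'. unfold tooth_point; simpl. rewrite Hlift, mapp_add. fold u.
      destruct (mapp A u), g, x0; unfold mapp, padd, psub, pscal; simpl; f_equal; ring. }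
    unfold pdist in *. rewrite E.
    eapply Rle_lt_trans; [apply pnorm_add_le|].
    enough (pnorm (mapp A (psub u (graph (P i) (Q i) s))) <= eps') by lra.
    pose proof (mbound_ge1 A).
    eapply Rle_trans; [apply pnorm_mapp_le_mbound|].
    eapply Rle_trans; [apply Rmult_le_compat_l; [lra | apply pnorm_graph_sub]|].
    eapply Rle_trans; [|exact Heps']. apply Rmult_le_compat_l; [lra|].
    pose proof (Rabs_pos (slope (P i) (Q i))). specialize (Hslope i).
    apply Rmult_le_compat; [apply Rabs_pos | lra | apply Hnear, Ht | lra].
Qed.

Lemma tooth_norm_gt : (forall i, Rabs (slope (P i) (Q i)) * h < Rabs eta) ->
  forall iz, Rabs eta < pnorm (mapp (minv A) (psub (tooth_point iz 1) (tooth_point iz 0))).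
Proof.
  intros Hslope iz. rewrite minv_tooth_point_sub.
  apply pnorm_tooth_gt; [apply tooth_width_pos, Hxi | apply Hslope | apply Rabs_tooth_sign].
Qed.

Lemma teeth_direction delta : 0 < delta <= PI / 2 ->
  (forall i, Rabs (slope (P i) (Q i)) * h < Rabs eta) ->
  h * mbound (minv A) <= sin delta * pnorm v * Rabs eta ->
  forall iz, dir_dist (psub (tooth_point iz 1) (tooth_point iz 0)) v <= delta \/
             dir_dist (psub (tooth_point iz 0) (tooth_point iz 1)) v <= delta.
Proof.
  intros Hdelta Hslope Hh iz. rewrite (psub_swap (tooth_point iz 0)).
  set (D := psub (tooth_point iz 1) (tooth_point iz 0)).
  pose proof (tooth_norm_gt Hslope iz) as Hw. fold D in Hw.
  pose proof (pnorm_mapp_le_mbound (minv A) D) as HwD.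
  assert (Hcross : cross D v = h).
  { rewrite <- fst_mapp_minv. unfold D. rewrite minv_tooth_point_sub. reflexivity. }
  pose proof (mbound_ge1 (minv A)). pose proof (Rabs_pos eta).
  pose proof (tooth_width_pos xi Hxi). pose proof (mapp_e2_pos A HA).
  assert (Hs : 0 < sin delta) by (apply sin_gt_0; pose proof PI_RGT_0; lra).
  assert (HD : 0 < pnorm D) by nra.
  apply dir_dist_close; [lra | exact HD | assumption |].
  rewrite Hcross, Rabs_right by lra. nra.
Qed.

Lemma teeth_length : (forall i, Rabs (slope (P i) (Q i)) * h < Rabs eta) ->
  forall iz, pdist (tooth_point iz 0) (tooth_point iz 1) > Rabs eta / opnorm (minv A).
Proof.
  intros Hslope iz. unfold pdist. rewrite pnorm_psub_sym.
  pose proof (tooth_norm_gt Hslope iz) as Hw.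
  pose proof (pnorm_mapp_le_opnorm (minv A) (psub (tooth_point iz 1) (tooth_point iz 0))) as Ho.
  pose proof (pnorm_nonneg (psub (tooth_point iz 1) (tooth_point iz 0))).
  pose proof (Rabs_pos eta).
  assert (0 < opnorm (minv A)) by nra.
  apply Rlt_gt, Rlt_div_l; nra.
Qed.

Lemma teeth_spec X gamma eps eps' delta amax :
  0 < delta <= PI / 2 ->
  is_union_of_segs I p q gamma -> eps_dense gamma eps X ->
  (forall i, 2 * h <= Rabs (fst (Q i) - fst (P i)) /\ Rabs (slope (P i) (Q i)) <= amax) ->
  mbound A * (2 * h * (1 + amax)) <= eps' ->
  amax * h < Rabs eta ->
  h * mbound (minv A) <= sin delta * pnorm v * Rabs eta ->
  exists (gamma' : pt -> Prop) (K : Type) (p' q' : K -> pt),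
    (forall x, gamma' x -> img (fun y => mapp A (J eta xi (mapp (minv A) y))) gamma x) /\
    is_union_of_segs K p' q' gamma' /\
    eps_dense gamma' (eps + eps') (Str X (pscal eta v)) /\
    (forall k, dir_dist (psub (q' k) (p' k)) v <= delta \/
               dir_dist (psub (p' k) (q' k)) v <= delta) /\
    (forall k, pdist (p' k) (q' k) > Rabs eta / opnorm (minv A)).
Proof.
  intros Hdelta Hunion Hdense Hseg Heps' Hflat Hsteep.
  assert (Hslope : forall i, Rabs (slope (P i) (Q i)) * h < Rabs eta).
  { intro i. destruct (Hseg i) as [_ Hm]. pose proof (tooth_width_pos xi Hxi).
    apply (Rmult_le_compat_r h) in Hm; lra. }
  exists teeth, tooth,
    (fun k => tooth_point (proj1_sig k) 0), (fun k => tooth_point (proj1_sig k) 1).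
  split; [|split; [|split; [|split]]].
  - apply teeth_in_image, Hunion.
  - intro y. apply iff_refl.
  - apply (teeth_dense X gamma eps eps' amax); try assumption; intro i; apply Hseg.
  - intro k. apply teeth_direction; assumption.
  - intro k. apply teeth_length, Hslope.
Qed.

End Teeth.

Theorem mainTheorem12 :
  forall (aeta eps' l delta delta' : R) (A : mat2Z),
    0 < aeta -> 0 < eps' -> 0 < l -> 0 < delta -> 0 < delta' ->
    in_SL2Z A ->
    let v := mapp A (0, 1) in
    exists xi0 : nat, (1 <= xi0)%nat /\
      forall (eta : R), Rabs eta = aeta ->
      forall (X : pt -> Prop) (eps : R) (I : Type) (p q : I -> pt)
             (gamma : pt -> Prop),
        (exists x, X x) ->
        0 < eps ->
        is_union_of_segs I p q gamma ->
        eps_dense gamma eps X ->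
        (forall i, dir_dist (psub (q i) (p i)) v > delta /\
                   dir_dist (psub (p i) (q i)) v > delta) ->
        (forall i, pdist (p i) (q i) > l) ->
        forall xi : nat, (xi0 <= xi)%nat ->
        exists (gamma' : pt -> Prop) (K : Type) (p' q' : K -> pt),
          (forall x, gamma' x ->
             img (fun y => mapp A (J eta xi (mapp (minv A) y))) gamma x) /\
          is_union_of_segs K p' q' gamma' /\
          eps_dense gamma' (eps + eps') (Str X (pscal eta v)) /\
          (forall k, dir_dist (psub (q' k) (p' k)) v <= delta' \/
                     dir_dist (psub (p' k) (q' k)) v <= delta') /\
          (forall k, pdist (p' k) (q' k) > Rabs eta / opnorm (minv A)).
Proof.
  intros aeta eps' l delta delta' A Haeta Heps' Hl Hdelta Hdelta' HA v. subst v.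
  destruct (exists_acute_angle_le delta Hdelta) as [d1 [[Hd1 Hd1le] Hs1]].
  destruct (exists_acute_angle_le delta' Hdelta') as [d2 [[Hd2 Hd2le] Hs2]].
  pose proof (mapp_e2_pos A HA). pose proof (mbound_ge1 A). pose proof (mbound_ge1 (minv A)).
  set (amax := mbound (minv A) / (sin d1 * pnorm (mapp A (0, 1)))).
  assert (Hamax : 0 < amax) by (apply Rdiv_lt_0_compat; nra).
  assert (Hev : eventually (fun xi =>
    tooth_width xi * 2 < sin d1 * pnorm (mapp A (0, 1)) * l /\
    tooth_width xi * (2 * mbound A * (1 + amax)) < eps' /\
    tooth_width xi * amax < aeta /\
    tooth_width xi * mbound (minv A) < sin d2 * pnorm (mapp A (0, 1)) * aeta)).
  { repeat apply filter_and; apply eventually_tooth_width_mul_lt;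
      solve [assumption | repeat apply Rmult_lt_0_compat; lra]. }
  destruct Hev as [N HN]. exists (S N). split; [lia|].
  intros eta Heta X eps I p q gamma _ _ Hunion Hdense Hdir Hlen xi Hxi.
  destruct (HN xi ltac:(lia)) as [Hwide [Hclose [Hflat Hsteep]]]. rewrite <- Heta in *.
  destruct (teeth_spec A eta xi I p q HA ltac:(lia) X gamma eps eps' d2 amax)
    as (gamma' & K & p' & q' & Himg & Hsegs & Hdense' & Hdir' & Hlen'); try assumption; try lra.
  - intro i. destruct (Hdir i) as [Hqp Hpq].
    destruct (transverse_seg_bounds A (p i) (q i) d1 l HA Hd1 (Rlt_le _ _ Hl)
      ltac:(lra) ltac:(lra) (Hlen i)) as [Hw Hm].
    split; [lra | exact Hm].
  - exists gamma', K, p', q'. do 3 (split; [assumption|]). split; [|exact Hlen'].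
    intro k. destruct (Hdir' k); [left | right]; lra.
Qed.
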